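(* Let $(A,\cdot)$ be a commutative associative algebra and $(A,\circ)$ a Lie-admissible algebra (i.e. $[x,y]=x\circ y-y\circ x$ defines a Lie algebra $(A,[-,-])$) such that for all $x,y,z\in A$: $$2(x\circ y)\cdot z-2(y\circ x)\cdot z=y\cdot(x\circ z)-x\cdot(y\circ z),\qquad 2x\circ(y\cdot z)=(z\cdot x)\circ y+z\cdot(x\circ y).$$ Then $(A,\cdot,[-,-])$ is a transposed Poisson algebra. In particular, if $(A,\cdot,\circ)$ is an anti-pre-Lie Poisson algebra, then $(A,\cdot,[-,-])$ is a transposed Poisson algebra.
   Context: All vector spaces are finite-dimensional over a field $\mathbb F$ of characteristic $0$. A transposed Poisson algebra is $(A,\cdot,[-,-])$ with $(A,\cdot)$ commutative associative, $(A,[-,-])$ a Lie algebra, and $2z\cdot[x,y]=[z\cdot x,y]+[x,z\cdot y]$ for all $x,y,z$. An anti-pre-Lie algebra is $(A,\circ)$ with $x\circ(y\circ z)-y\circ(x\circ z)=[y,x]\circ z$ and $[x,y]\circ z+[y,z]\circ x+[z,x]\circ y=0$; an anti-pre-Lie Poisson algebra is $(A,\cdot,\circ)$ with $(A,\cdot)$ commutative associative, $(A,\circ)$ anti-pre-Lie, satisfying the two displayed identities. *)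

From HB Require Import structures.
From mathcomp Require Import all_boot all_order all_algebra.
Set Implicit Arguments. Unset Strict Implicit. Unset Printing Implicit Defensive.
Import GRing.Theory.
Local Open Scope ring_scope.

Section Defs.
Variables (F : fieldType) (A : lmodType F).

Definition bilinear_op (op : A -> A -> A) : Prop :=
  (forall (a : F) (x y z : A), op (a *: x + y) z = a *: op x z + op y z) /\
  (forall (a : F) (x y z : A), op x (a *: y + z) = a *: op x y + op x z).

Definition com_assoc_alg (op : A -> A -> A) : Prop :=
  bilinear_op op /\
  (forall x y : A, op x y = op y x) /\
  (forall x y z : A, op (op x y) z = op x (op y z)).

Definition lie_alg (br : A -> A -> A) : Prop :=
  bilinear_op br /\
  (forall x : A, br x x = 0) /\
  (forall x y z : A, br x (br y z) + br y (br z x) + br z (br x y) = 0).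

Definition commutator (circ : A -> A -> A) : A -> A -> A :=
  fun x y => circ x y - circ y x.

Definition lie_admissible (circ : A -> A -> A) : Prop :=
  bilinear_op circ /\ lie_alg (commutator circ).

Definition transposed_poisson (mul br : A -> A -> A) : Prop :=
  com_assoc_alg mul /\ lie_alg br /\
  (forall x y z : A,
     2%:R *: mul z (br x y) = br (mul z x) y + br x (mul z y)).

Definition anti_pre_lie (circ : A -> A -> A) : Prop :=
  bilinear_op circ /\
  (forall x y z : A,
     circ x (circ y z) - circ y (circ x z) = circ (commutator circ y x) z) /\
  (forall x y z : A,
     circ (commutator circ x y) z + circ (commutator circ y z) x
     + circ (commutator circ z x) y = 0).

Definition compat_identities (mul circ : A -> A -> A) : Prop :=
  (forall x y z : A,
     2%:R *: mul (circ x y) z - 2%:R *: mul (circ y x) z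
     = mul y (circ x z) - mul x (circ y z)) /\
  (forall x y z : A,
     2%:R *: circ x (mul y z) = circ (mul z x) y + mul z (circ x y)).

Definition anti_pre_lie_poisson (mul circ : A -> A -> A) : Prop :=
  com_assoc_alg mul /\ anti_pre_lie circ /\ compat_identities mul circ.

End Defs.

From HB Require Import structures.
From mathcomp Require Import all_boot all_order all_algebra.
Import GRing.Theory.
Local Open Scope ring_scope.

(* Write [P = x o (z y)], [Q = y o (z x)] and [d = z [x,y]].  The second
   compatibility identity gives [2 P = (x y) o z + y (x o z)] and
   [2 Q = (x y) o z + x (y o z)], so by the first one [2 (P - Q) = 2 d], hence
   [P - Q = d] as [2] is invertible.  The second identity also gives
   [(z x) o y - (z y) o x = 2 (P - Q) - d = d], and then
   [[z x, y] + [x, z y] = ((z x) o y - (z y) o x) + (P - Q) = 2 d].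

   For an anti-pre-Lie algebra, the first axiom turns the cyclic sum of
   [x o [y,z]] into minus the cyclic sum of [[x,y] o z], which vanishes by the
   second axiom; the Jacobi sum for [[-,-]] is the difference of the two. *)

Section BilinearOp.
Context {F : fieldType} {A : lmodType F} {op : A -> A -> A}.
Hypothesis op_bilin : bilinear_op op.

Lemma op0l z : op 0 z = 0.
Proof. by have := op_bilin.1 (-1) z z z; rewrite !scaleN1r !addNr. Qed.

Lemma op0r x : op x 0 = 0.
Proof. by have := op_bilin.2 (-1) x x x; rewrite !scaleN1r !addNr. Qed.

Lemma opNl x z : op (- x) z = - op x z.
Proof. by have := op_bilin.1 (-1) x 0 z; rewrite !scaleN1r !addr0 op0l addr0. Qed.

Lemma opNr x z : op x (- z) = - op x z.
Proof. by have := op_bilin.2 (-1) x z 0; rewrite !scaleN1r !addr0 op0r addr0. Qed.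

Lemma opDr x y z : op x (y + z) = op x y + op x z.
Proof. by have := op_bilin.2 1 x y z; rewrite !scale1r. Qed.

Lemma opBr x y z : op x (y - z) = op x y - op x z.
Proof. by rewrite opDr opNr. Qed.

End BilinearOp.

Lemma commutator_bilinear {F : fieldType} {A : lmodType F} (circ : A -> A -> A) :
  bilinear_op circ -> bilinear_op (commutator circ).
Proof.
by move=> [circDl circDr]; split=> a x y z;
  rewrite /commutator circDl circDr scalerBr opprD addrACA.
Qed.

Lemma commutatorC {F : fieldType} {A : lmodType F} (circ : A -> A -> A) x y :
  commutator circ x y = - commutator circ y x.
Proof. by rewrite /commutator opprB. Qed.

Section CompatibleProducts.
Context {F : fieldType} {A : lmodType F} {mul circ : A -> A -> A}.
Hypotheses (two_neq0 : 2%:R != 0 :> F) (mul_bilin : bilinear_op mul)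
  (mulC : forall x y, mul x y = mul y x) (compat : compat_identities mul circ).

Lemma circ_mul_skew x y z :
  circ x (mul z y) - circ y (mul z x) = mul z (commutator circ x y).
Proof.
have [compat1 compat2] := compat.
apply: (scalerI two_neq0).
rewrite scalerBr compat2 compat2 (mulC y x) opprD addrACA subrr add0r.
by rewrite -compat1 -scalerBr /commutator (opBr mul_bilin) !(mulC z).
Qed.

Lemma commutator_mul_leibniz x y z :
  2%:R *: mul z (commutator circ x y)
  = commutator circ (mul z x) y + commutator circ x (mul z y).
Proof.
have [_ compat2] := compat.
set d := mul z (commutator circ x y).
have circ_mul_swap : circ (mul z x) y - circ (mul z y) x = d.
  have -> : circ (mul z x) y = 2%:R *: circ x (mul z y) - mul z (circ x y).
    by rewrite (mulC z y) compat2 addrK.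
  have -> : circ (mul z y) x = 2%:R *: circ y (mul z x) - mul z (circ y x).
    by rewrite (mulC z x) compat2 addrK.
  rewrite opprD opprK addrACA -scalerBr circ_mul_skew [- _ + _]addrC -opprB.
  by rewrite -(opBr mul_bilin) -/d scaler_nat mulr2n addrK.
rewrite /commutator addrA [RHS](ACl ((1*4)*(3*2)))%AC /= circ_mul_swap.
by rewrite circ_mul_skew scaler_nat mulr2n.
Qed.

End CompatibleProducts.

Lemma transposed_poisson_compat {F : fieldType} {A : lmodType F}
    (mul circ : A -> A -> A) :
  2%:R != 0 :> F ->
  com_assoc_alg mul -> lie_admissible circ -> compat_identities mul circ ->
  transposed_poisson mul (commutator circ).
Proof.
move=> two_neq0 mul_ca [_ lie] compat; have [mul_bilin [mulC _]] := mul_ca.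
by split=> //; split=> //; apply: commutator_mul_leibniz.
Qed.

Section AntiPreLie.
Context {F : fieldType} {A : lmodType F} {circ : A -> A -> A}.
Hypothesis apl : anti_pre_lie circ.
Local Notation "[ x , y ]" := (commutator circ x y).

Lemma anti_pre_lie_cyclic_circ_commutator x y z :
  circ x [y, z] + circ y [z, x] + circ z [x, y] = 0.
Proof.
have [circ_bilin [apl1 apl2]] := apl.
have -> : circ x [y, z] + circ y [z, x] + circ z [x, y]
          = circ [y, x] z + circ [z, y] x + circ [x, z] y.
  rewrite -!apl1 /commutator !(opBr circ_bilin) !addrA.
  by rewrite [LHS](ACl (1*4*3*6*5*2))%AC.
rewrite (commutatorC _ y x) (commutatorC _ z y) (commutatorC _ x z).
by rewrite !(opNl circ_bilin) -!opprD apl2 oppr0.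
Qed.

Lemma anti_pre_lie_jacobi x y z :
  [x, [y, z]] + [y, [z, x]] + [z, [x, y]] = 0.
Proof.
have [_ [_ apl2]] := apl.
have unfold_outer u w : [u, w] = circ u w - circ w u by [].
rewrite (unfold_outer x) (unfold_outer y [z, x]) (unfold_outer z [x, y]).
rewrite !addrA [LHS](ACl (1*3*5*(6*2*4)))%AC /= -!opprD apl2 oppr0 addr0.
exact: anti_pre_lie_cyclic_circ_commutator.
Qed.

Lemma anti_pre_lie_admissible : lie_admissible circ.
Proof.
have [circ_bilin _] := apl.
split=> //; split; first exact: commutator_bilinear.
split=> [x | x y z]; first by rewrite /commutator subrr.
exact: anti_pre_lie_jacobi.
Qed.

End AntiPreLie.

Theorem proposition3p44 (F : fieldType) (A : vectType F)
  (Hchar : [pchar F] =i pred0) :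
  (forall mul circ : A -> A -> A,
     com_assoc_alg mul -> lie_admissible circ -> compat_identities mul circ ->
     transposed_poisson mul (commutator circ)) /\
  (forall mul circ : A -> A -> A,
     anti_pre_lie_poisson mul circ ->
     transposed_poisson mul (commutator circ)).
Proof.
have two_neq0 : 2%:R != 0 :> F by rewrite (pcharf0P F).1.
split=> mul circ; first exact: transposed_poisson_compat two_neq0.
move=> [mul_ca [apl compat]].
exact: transposed_poisson_compat two_neq0 mul_ca
  (anti_pre_lie_admissible apl) compat.
Qed.
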